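(* Let $N,j,k,m$ be integers. Work with a variable $q^{1/8}$, set $v=q^{1/2}$, $\{n\}=v^n-v^{-n}$, $A(a,k)=\{a-k\}\{a+k\}$ and $t_{j,N}=i^{N-1-j}q^{(N+j)^2/8}$. Then: (1) $A(N-j,k)-A(N+j,k)-2\{2j\}\{N\}\{N-1\}/\{1\}$ is divisible by $\{N\}^2$ in $\mathbb Z[v^{\pm1}]$; (2) $\{N-j\}=-\{N+j\}+\{N\}(v^j+v^{-j})$; (3) there exists $Q\in\mathbb Q[v^{\pm1}]$ such that $t_{-j,N}^m=t_{j,N}^m+\frac{mj}{2}\,t_{j,N}^m\{N\}+t_{j,N}^m(v^N+1)^2Q$.
   Context: All quantities are Laurent polynomials in $q^{1/8}$ with coefficients in $\mathbb Q(i)$; $\{2j\}/\{1\}\in\mathbb Z[v^{\pm1}]$, so the expression in (1) lies in $\mathbb Z[v^{\pm1}]$. *)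

From HB Require Import structures.
From mathcomp Require Import all_boot all_order all_algebra all_field.
Set Implicit Arguments. Unset Strict Implicit. Unset Printing Implicit Defensive.
Import Order.TTheory GRing.Theory Num.Theory.
Local Open Scope ring_scope.

(* Ambient ring: Laurent polynomials in x = q^(1/8) with complex-algebraic
   coefficients (containing Q(i)), embedded in the fraction field
   {fraction {poly algC}}; x is the class of 'X. *)
Definition K : fieldType := {fraction {poly algC}}.

Definition x8 : K := tofrac ('X : {poly algC}).

Definition v : K := x8 ^+ 4.

Definition br (n : int) : K := v ^ n - v ^ (- n).

Definition AA (a k : int) : K := br (a - k) * br (a + k).

Definition tt (j N : int) : K :=
  (tofrac (('i : algC)%:P)) ^ (N - 1 - j) * x8 ^ ((N + j) ^+ 2).

(* f lies in S[v^{+-1}]: f = p(v) / v^n for a polynomial p with coefficients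
   in S and some n : nat. *)
Definition laurent_v (S : {pred algC}) (f : K) : Prop :=
  exists (n : nat) (p : {poly algC}),
    p \is a polyOver S /\ f = tofrac (p \Po 'X^4) / v ^+ n.

Definition intC : {pred algC} := fun c => c \is a Num.int.
Definition ratC : {pred algC} := Crat.

From HB Require Import structures.
From mathcomp Require Import all_boot all_order all_algebra all_field.
From mathcomp Require Import ring.

(* With {n} = v^n - v^-n and its companion cbr n = v^n + v^-n, everything
   follows from the product-to-sum rules {a} cbr b = {a+b} + {a-b} and
   {a}{b} = cbr (a+b) - cbr (a-b); (2) is the first of them.  For (1),
   A(N-j,k) - A(N+j,k) = -{2N}{2j} and {2N}{1} + 2{N}{N-1} = {N}^2 cbr 1, so the
   left-hand side is -{N}^2 cbr 1 {2j}/{1}, and {n}/{1} is an integral Laurent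
   polynomial by the recurrence {n+1} = v{n} + v^-n{1}.  For (3),
   t_{-j,N} = t_{j,N} z^j with z = -v^-N, so that z - z^-1 = {N} and
   1 - z^-1 = v^N + 1; by induction on M, z^M = 1 + M/2 (z - z^-1) up to
   (1 - z^-1)^2 times a rational Laurent polynomial. *)

Set Implicit Arguments.
Unset Strict Implicit.
Unset Printing Implicit Defensive.
Import Order.TTheory GRing.Theory Num.Theory.
Local Open Scope ring_scope.

Lemma intC_subring_closed : GRing.subring_closed intC.
Proof. exact: int_num_subring. Qed.

HB.instance Definition _ :=
  GRing.isSubringClosed.Build algC intC intC_subring_closed.

Lemma x8_neq0 : x8 != 0.
Proof. by rewrite tofrac_eq0 polyX_eq0. Qed.

Lemma v_neq0 : v != 0.
Proof. by rewrite expf_neq0 ?x8_neq0. Qed.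

Lemma vz_neq0 n : v ^ n != 0.
Proof. by rewrite expfz_neq0 // v_neq0. Qed.

Lemma vzD a b : v ^ (a + b) = v ^ a * v ^ b.
Proof. exact: expfzDr v_neq0. Qed.

Definition cbr (n : int) : K := v ^ n + v ^ (- n).

Lemma brN n : br (- n) = - br n.
Proof. by rewrite /br opprK opprB. Qed.

Lemma br0 : br 0 = 0.
Proof. by rewrite /br oppr0 subrr. Qed.

Lemma cbrN n : cbr (- n) = cbr n.
Proof. by rewrite /cbr opprK addrC. Qed.

(* Once the powers are split, these are identities between monomials in v^a,
   v^b and their inverses that need no cancellation x * x^-1 = 1, so [ring]
   suffices. *)
Lemma br_mul_cbr a b : br a * cbr b = br (a + b) + br (a - b).
Proof. by rewrite /br /cbr -!invr_expz !vzD -!invr_expz !invfM invrK; ring. Qed.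

Lemma br_mul a b : br a * br b = cbr (a + b) - cbr (a - b).
Proof. by rewrite /br /cbr -!invr_expz !vzD -!invr_expz !invfM invrK; ring. Qed.

Lemma br_succ n : br (n + 1) = v * br n + v ^ (- n) * br 1.
Proof. by rewrite /br -!invr_expz vzD expr1z invfM; ring. Qed.

Lemma br_double n : br (2 * n) = br n * cbr n.
Proof. by rewrite br_mul_cbr subrr br0 addr0 mul2z. Qed.

Lemma AA_cbr a k : AA a k = cbr (2 * a) - cbr (2 * k).
Proof.
rewrite /AA br_mul -(cbrN (2 * k)).
by congr (cbr _ - cbr _); ring.
Qed.

Lemma AA_sub a j k : AA (a - j) k - AA (a + j) k = - (br (2 * a) * br (2 * j)).
Proof. by rewrite !AA_cbr br_mul mulrBr mulrDr; ring. Qed.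

Lemma br_double_mul_br1 n :
  br (2 * n) * br 1 = br n ^+ 2 * cbr 1 - 2 * br n * br (n - 1).
Proof.
have br1_cbr : br 1 * cbr n = br (n + 1) - br (n - 1).
  by rewrite br_mul_cbr -brN opprB [1 + n]addrC.
have brn_cbr1 : br n * cbr 1 = br (n + 1) + br (n - 1) by rewrite br_mul_cbr.
by rewrite br_double -mulrA [cbr n * _]mulrC br1_cbr expr2 -mulrA brn_cbr1; ring.
Qed.

Lemma tofrac_comp_Xn4 n : tofrac ('X^n \Po 'X^4 : {poly algC}) = v ^+ n.
Proof. by rewrite comp_Xn_poly -exprM tofracXn /v -exprM mulnC. Qed.

Section LaurentV.
Variable S : subringClosed algC.
Implicit Types f g : K.

Lemma laurent_v_polyC c : c \in S -> laurent_v S (tofrac c%:P).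
Proof.
by move=> Sc; exists 0%N, c%:P; rewrite polyOverC comp_polyC expr0 divr1.
Qed.

Lemma laurent_v0 : laurent_v S 0.
Proof. by rewrite -tofrac0 -polyC0; apply: laurent_v_polyC; rewrite rpred0. Qed.

Lemma laurent_v1 : laurent_v S 1.
Proof. by rewrite -tofrac1 -polyC1; apply: laurent_v_polyC; rewrite rpred1. Qed.

Lemma laurent_vN f : laurent_v S f -> laurent_v S (- f).
Proof.
move=> [n [p [Sp ->]]]; exists n, (- p).
by rewrite rpredN !raddfN mulNr.
Qed.

Lemma laurent_vD f g : laurent_v S f -> laurent_v S g -> laurent_v S (f + g).
Proof.
move=> [n [p [Sp ->]]] [m [q [Sq ->]]].
exists (n + m)%N, (p * 'X^m + q * 'X^n); split.
  by rewrite rpredD ?rpredM ?rpredX ?polyOverX.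
have vXn_neq0 k : v ^+ k != 0 by rewrite expf_neq0 ?v_neq0.
rewrite comp_polyD !comp_polyM tofracD !tofracM !tofrac_comp_Xn4 exprD.
by rewrite addf_div ?vXn_neq0.
Qed.

Lemma laurent_vM f g : laurent_v S f -> laurent_v S g -> laurent_v S (f * g).
Proof.
move=> [n [p [Sp ->]]] [m [q [Sq ->]]].
exists (n + m)%N, (p * q); split; first by rewrite rpredM.
by rewrite comp_polyM tofracM exprD mulf_div.
Qed.

Lemma laurent_v_expz n : laurent_v S (v ^ n).
Proof.
case: n => n.
  exists 0%N, 'X^n; split; first by rewrite rpredX ?polyOverX.
  by rewrite tofrac_comp_Xn4 expr0 divr1.
exists n.+1, 1; split; first by rewrite rpred1.
by rewrite comp_polyC tofrac1 div1r NegzE -invr_expz.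
Qed.

Lemma laurent_v_nat n : laurent_v S n%:R.
Proof.
rewrite -(rmorph_nat (@tofrac _ \o polyC)).
by apply: laurent_v_polyC; rewrite rpred_nat.
Qed.

End LaurentV.

Lemma two_neq0 : (2 : K) != 0.
Proof. by rewrite -(rmorph_nat (@tofrac _ \o polyC)) fmorph_eq0 pnatr_eq0. Qed.

Lemma laurent_v_half : laurent_v ratC 2^-1.
Proof.
rewrite -[2](rmorph_nat (@tofrac _ \o polyC)) -fmorphV.
by apply: laurent_v_polyC; rewrite rpredV rpred_nat.
Qed.

Lemma br_div_br1 n : exists2 G, laurent_v intC G & br n = br 1 * G.
Proof.
have br_nat (k : nat) : exists2 G, laurent_v intC G & br k = br 1 * G.
  elim: k => [|k [G IG E]]; first by exists 0; [exact: laurent_v0 | rewrite br0 mulr0].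
  exists (v * G + v ^ (- k%:Z)).
    apply/laurent_vD/laurent_v_expz/laurent_vM => //.
    by rewrite -[v]expr1z; apply: laurent_v_expz.
  by rewrite intS addrC br_succ E; ring.
case: n => n; first exact: br_nat.
have [G IG E] := br_nat n.+1; exists (- G); first exact: laurent_vN.
by rewrite NegzE brN E mulrN.
Qed.

Lemma br1_neq0 : br 1 != 0.
Proof.
have v2_neq1 : v ^+ 2 != 1.
  rewrite /v /x8 -exprM -tofracXn -tofrac1 tofrac_eq.
  by apply/eqP => /(congr1 (fun p : {poly algC} => size p)); rewrite size_polyXn size_poly1.
apply: contra v2_neq1; rewrite /br expr1z -invr_expz expr1z subr_eq0 => /eqP v_eqVv.
by rewrite expr2 {2}v_eqVv mulfV ?v_neq0.
Qed.

Lemma AA_sub_br_dvd N j k : exists2 g, laurent_v intC g &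
  AA (N - j) k - AA (N + j) k - 2 * br (2 * j) * br N * br (N - 1) / br 1
  = br N ^+ 2 * g.
Proof.
have [G IG E] := br_div_br1 (2 * j).
exists (- (cbr 1 * G)).
  by apply/laurent_vN/laurent_vM => //; apply: laurent_vD; apply: laurent_v_expz.
rewrite AA_sub E.
have -> : 2 * (br 1 * G) * br N * br (N - 1) / br 1 = 2 * G * br N * br (N - 1).
  by apply: (mulIf br1_neq0); rewrite divfK ?br1_neq0; ring.
by rewrite mulrA br_double_mul_br1; ring.
Qed.

Lemma br_sub_decomp N j : br (N - j) = - br (N + j) + br N * (v ^ j + v ^ (- j)).
Proof. by rewrite -/(cbr j) br_mul_cbr addKr. Qed.

Definition expansion2 (F : fieldType) (z c Q : F) : F :=
  1 + c / 2 * (z - z^-1) + (1 - z^-1) ^+ 2 * Q.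

Lemma mul_expansion2 (F : fieldType) (z c Q : F) : z != 0 -> 2 != 0 :> F ->
  z * expansion2 z c Q = expansion2 z (c + 1) (z * Q + z * (c * z + c + 1) / 2).
Proof.
by move=> z_neq0 two_neq0; rewrite /expansion2; field; rewrite z_neq0 two_neq0.
Qed.

Lemma expansion2_inv (F : fieldType) (z c Q : F) : z != 0 -> 2 != 0 :> F ->
  expansion2 z^-1 c Q = expansion2 z (- c) (z ^+ 2 * Q).
Proof.
by move=> z_neq0 two_neq0; rewrite /expansion2 invrK; field; rewrite z_neq0 two_neq0.
Qed.

Lemma exprn_expansion2 (z : K) (n : nat) : z != 0 -> laurent_v ratC z ->
  exists2 Q, laurent_v ratC Q & z ^+ n = expansion2 z n%:R Q.
Proof.
move=> z_neq0 Lz; elim: n => [|n [Q LQ E]].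
  by exists 0; [exact: laurent_v0 | rewrite /expansion2 expr0 !mul0r mulr0 !addr0].
exists (z * Q + z * (n%:R * z + n%:R + 1) / 2).
  have Lc : laurent_v ratC (n%:R * z + n%:R + 1).
    apply: laurent_vD; last exact: laurent_v1.
    apply: laurent_vD; last exact: laurent_v_nat.
    by apply: laurent_vM => //; apply: laurent_v_nat.
  apply: laurent_vD; first exact: laurent_vM.
  by apply: laurent_vM; [exact: laurent_vM | exact: laurent_v_half].
by rewrite exprS E (mul_expansion2 _ _ z_neq0 two_neq0) natr1.
Qed.

Lemma exprz_expansion2 (z : K) (M : int) :
  z != 0 -> laurent_v ratC z -> laurent_v ratC z^-1 ->
  exists2 Q, laurent_v ratC Q & z ^ M = expansion2 z M%:~R Q.
Proof.
move=> z_neq0 Lz LzV; case: M => n; first exact: exprn_expansion2.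
have [|Q LQ E] := exprn_expansion2 n.+1 _ LzV; first by rewrite invr_eq0.
exists (z ^+ 2 * Q); first by rewrite expr2; apply: laurent_vM (laurent_vM Lz Lz) LQ.
by rewrite NegzE -exprz_inv -exprnP E (expansion2_inv _ _ z_neq0 two_neq0) intrN.
Qed.

Local Notation iK := (tofrac ('i : algC)%:P : K).

Lemma iK_sqr : iK ^+ 2 = -1.
Proof. by rewrite -tofracXn -polyC_exp sqrCi polyCN polyC1 tofracN tofrac1. Qed.

Lemma iK_neq0 : iK != 0.
Proof. by rewrite tofrac_eq0 polyC_eq0 neq0Ci. Qed.

Lemma ttN j N : tt (- j) N = tt j N * (- v ^ (- N)) ^ j.
Proof.
have iK_2j : iK ^ (2 * j) = (-1) ^ j by rewrite -exprz_exp; congr (_ ^ j); exact: iK_sqr.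
have x8_4Nj : x8 ^ (4 * (- N * j)) = v ^ (- N * j) by rewrite -exprz_exp.
rewrite /tt (_ : N - 1 - - j = N - 1 - j + 2 * j); last by ring.
rewrite (_ : (N + - j) ^+ 2 = (N + j) ^+ 2 + 4 * (- N * j)); last by ring.
rewrite (expfzDr _ _ iK_neq0) (expfzDr _ _ x8_neq0) iK_2j x8_4Nj.
by rewrite -[- v ^ (- N)]mulN1r [(-1 * _) ^ j]expfzMl exprz_exp mulrACA.
Qed.

Lemma tt_opp_expansion N j m : exists2 Q, laurent_v ratC Q &
  tt (- j) N ^ m = tt j N ^ m + (m * j)%:~R / 2 * tt j N ^ m * br N
                   + tt j N ^ m * (v ^ N + 1) ^+ 2 * Q.
Proof.
set z := - v ^ (- N).
have zV : z^-1 = - v ^ N by rewrite /z invrN invr_expz opprK.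
have z_neq0 : z != 0 by rewrite oppr_eq0 vz_neq0.
have Lz : laurent_v ratC z by apply/laurent_vN/laurent_v_expz.
have LzV : laurent_v ratC z^-1 by rewrite zV; apply/laurent_vN/laurent_v_expz.
have [Q LQ E] := exprz_expansion2 (j * m) z_neq0 Lz LzV.
exists Q => //.
have z_subV : z - z^-1 = br N by rewrite zV opprK addrC.
have one_subV : 1 - z^-1 = v ^ N + 1 by rewrite zV opprK addrC.
by rewrite ttN expfzMl exprz_exp E /expansion2 z_subV one_subV (mulrC j); ring.
Qed.

Theorem lemma2p1 (N j k m : int) :
  [/\ (exists g : K, laurent_v intC g /\
         AA (N - j) k - AA (N + j) k - 2 * br (2 * j) * br N * br (N - 1) / br 1
         = br N ^+ 2 * g),
      br (N - j) = - br (N + j) + br N * (v ^ j + v ^ (- j)) &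
      (exists Q : K, laurent_v ratC Q /\
         tt (- j) N ^ m = tt j N ^ m + (m * j)%:~R / 2 * tt j N ^ m * br N
                          + tt j N ^ m * (v ^ N + 1) ^+ 2 * Q)].
Proof.
split; first by have [g Lg E] := AA_sub_br_dvd N j k; exists g.
  exact: br_sub_decomp.
by have [Q LQ E] := tt_opp_expansion N j m; exists Q.
Qed.
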